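(* Let $\mathsf{T}$ be a rooted plane tree, let $k\geq 0$ be an integer, and let $\delta\in\mathsf{Pop}^k(\mathcal{O}(\mathsf{T}))$. For all $v\in\mathsf{T}$ and all $u\in\delta(v)$, we have $\mathrm{rk}_v(u)\geq k$.
   Context: A rooted plane tree $\mathsf{T}$ is a finite tree with a distinguished root, regarded as a poset $\leq_\mathsf{T}$ in which $v'\leq_\mathsf{T} v$ iff $v$ lies on the path from $v'$ to the root. $\Delta_\mathsf{T}(v)=\{v':v'\leq_\mathsf{T} v\}$; a leaf is a node covering nothing. $\mathcal{M}_\mathsf{T}$ is the set of maximal chains (leaf-to-root paths). For $C\in\mathcal{M}_\mathsf{T}$ and $v\in C$: $\mathrm{height}_C(v)$ is the number of elements of $C$ strictly below $v$; if $v$ is not a leaf, $\mathrm{ch}_C(v)$ is the element of $C$ covered by $v$; $b_C(v)=|\Delta_\mathsf{T}(v)|-\mathrm{height}_C(v)-1$; $f_C(v)=0$ if $v$ is a leaf, and otherwise with $w=\mathrm{ch}_C(v)$, $f_C(v)=f_C(w)+1$ if $f_C(w)+1\leq b_C(w)$ and $f_C(v)=f_C(w)$ otherwise. For $v\in\mathsf{T}$, the tree $\mathsf{T}^*_v$ is obtained from $\mathsf{T}$ by attaching, below the leaf of each maximal chain $C\in\mathcal{M}_\mathsf{T}$ containing $v$, a new chain of $f_C(v)$ nodes. For a rooted tree, the height of a node $u$ is the maximum length (number of elements minus one) of a chain of nodes lying weakly below $u$. The $v$-rank of $u\in\mathsf{T}$ is $\mathrm{rk}_v(u)=-1$ if $u\not\leq_\mathsf{T}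 v$, $\mathrm{rk}_v(u)=\infty$ if $u=v$, and otherwise $\mathrm{rk}_v(u)$ is the height of $u$ in $\mathsf{T}^*_v$. An ornament is a nonempty set of nodes inducing a connected subgraph; an ornamentation is a map $\delta$ from nodes to ornaments such that the maximal element of $\delta(v)$ is $v$ and any two sets $\delta(v),\delta(v')$ are nested or disjoint. $\mathcal{O}(\mathsf{T})$ is the set of ornamentations ordered by pointwise inclusion (a lattice with meet given by pointwise intersection), and $\mathsf{Pop}(\delta)=\bigwedge(\{\delta\}\cup\{\delta':\delta'\lessdot\delta\})$; $\mathsf{Pop}^k$ is the $k$-th iterate. *)

From mathcomp Require Import all_boot.
Set Implicit Arguments. Unset Strict Implicit. Unset Printing Implicit Defensive.

(* A finite rooted tree on the node type T, given by its parent map: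
   [par root = root] and every node reaches the root by iterating [par].
   (The plane structure, i.e. the order of children, plays no role in the
   statement and is not recorded.) *)
Record rtree (T : finType) := RTree {
  root : T;
  par : T -> T;
  par_root : par root = root;
  reach_root : forall v, fconnect par v root }.

Section Tree.
Variables (T : finType) (par : T -> T).

Definition tle (v' v : T) : bool := fconnect par v' v.

Definition Delta (v : T) : {set T} := [set w | tle w v].

(* leaf : covers nothing (the root is the only fixed point of par) *)
Definition is_leaf (v : T) : bool := [forall w, (par w == v) ==> (w == v)].

(* number of parent steps from w up to u (when w <= u) *)
Definition dist (w u : T) : nat := index u (traject par w #|T|).

Definition height (u : T) : nat := \max_(w | tle w u) dist w u.

(* Maximal chains are indexed by their leaf l: C_l = [set w | tle l w]. *)
Definition chain (l : T) : {set T} := [set w | tle l w].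

Definition heightC (l v : T) : nat :=
  #|[set w | (w \in chain l) && tle w v && (w != v)]|.

Definition bC (l v : T) : nat := #|Delta v| - heightC l v - 1.

(* f along the chain C_l, indexed by position i (node iter i par l);
   position 0 is the leaf l, and the child of position i.+1 is position i. *)
Fixpoint fseq (l : T) (i : nat) : nat :=
  match i with
  | 0 => 0
  | i'.+1 => let w := iter i' par l in
             if fseq l i' + 1 <= bC l w then fseq l i' + 1 else fseq l i'
  end.

Definition fC (l v : T) : nat := fseq l (heightC l v).

Definition tree_edge_in (S : {set T}) : rel T :=
  [rel x y | [&& x \in S, y \in S &
     ((par x == y) && (x != y)) || ((par y == x) && (y != x))]].

Definition ornament (S : {set T}) : bool :=
  (S != set0) && [forall x in S, forall y in S, connect (tree_edge_in S) x y].

Definition is_ornamentation (d : {ffun T -> {set T}}) : bool :=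
  [forall v, ornament (d v)]
  && [forall v, (v \in d v) && [forall w in d v, tle w v]]
  && [forall v, forall v', (d v \subset d v') || (d v' \subset d v)
                          || [disjoint d v & d v']].

Definition orn_le (d1 d2 : {ffun T -> {set T}}) : bool :=
  [forall v, d1 v \subset d2 v].
Definition orn_lt (d1 d2 : {ffun T -> {set T}}) : bool :=
  orn_le d1 d2 && (d1 != d2).

Definition orn_covered (d' d : {ffun T -> {set T}}) : bool :=
  [&& is_ornamentation d', orn_lt d' d &
   [forall d'' : {ffun T -> {set T}},
      ~~ [&& is_ornamentation d'', orn_lt d' d'' & orn_lt d'' d]]].

(* Pop(d) = meet (pointwise intersection) of d and all elements it covers *)
Definition Pop (d : {ffun T -> {set T}}) : {ffun T -> {set T}} :=
  [ffun v => d v :&: \bigcap_(d' | orn_covered d' d) d' v].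

Definition in_Popk (k : nat) (d : {ffun T -> {set T}}) : Prop :=
  exists d0, is_ornamentation d0 /\ d = iter k Pop d0.

(* The tree T*_v: below the leaf l of every maximal chain containing v,
   attach a new chain of f_{C_l}(v) nodes. *)
Definition ext (v l : T) : nat :=
  if is_leaf l && tle l v then fC l v else 0.

Definition Tstar (v : T) : finType := (T + {l : T & 'I_(ext v l)})%type.

Definition par_star (v : T) (x : Tstar v) : Tstar v :=
  match x with
  | inl y => inl (par y)
  | inr (existT l i) =>
      match i with
      | Ordinal 0 _ => inl l
      | Ordinal n.+1 H => inr (existT _ l (Ordinal (ltnW H)))
      end
  end.

End Tree.

(* values of the v-rank: -1, a natural number, or infinity *)
Inductive rank := RNeg | RFin of nat | RInf.

Definition rank_ge (r : rank) (k : nat) : bool :=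
  match r with RNeg => false | RFin n => k <= n | RInf => true end.

Definition rk (T : finType) (par : T -> T) (v u : T) : rank :=
  if ~~ tle par u v then RNeg
  else if u == v then RInf
  else RFin (height (@par_star T par v) (inl u)).

(* Write d_k for Pop^k(d_0).  Connectedness of an ornament with top v amounts
   to closure under parents below v.  Removing a maximal proper block d(b) from
   d(v) is a cover relation of O(T) as soon as d(v) has nothing else below b;
   the deepest maximal block under a child c of v has this property, so every
   application of Pop that keeps c in d(v) deletes from d(v) a new node of
   Delta(c).  Hence if u in d_k(v) lies below c, then Delta(c) contains k missing
   nodes besides the segment from u to c, which is exactly the room b_C(c)
   needed for f_C to increase between c and v.  Induction on k, descending
   inside d_k(v) or else into the maximal block containing u, yields a leaf l
   below u with k <= dist(l, u) + f_{C_l}(v), and the chain of f_{C_l}(v) nodes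
   hanging below l in T*_v gives rk_v(u) >= k. *)

From Pilot Require Import Defs.
From mathcomp Require Import all_boot zify.
Set Implicit Arguments. Unset Strict Implicit. Unset Printing Implicit Defensive.

Section Measure.
Variables (X : Type) (f : X -> X) (D : X -> nat).
Hypothesis Df : forall x, D (f x) = (D x).-1.

Lemma iter_measure n x : D (iter n f x) = D x - n.
Proof. by elim: n => [|n IH] /=; rewrite ?subn0 // Df IH subnS. Qed.

End Measure.

Lemma dist_measure (X : finType) (f : X -> X) (D : X -> nat) :
  (forall x, D (f x) = (D x).-1) ->
  forall w u, fconnect f w u -> 0 < D u -> dist f w u = D w - D u.
Proof.
move=> Df w u wu Du.
have wu_lt : findex f w u < #|X| := leq_trans (findex_max wu) (max_card _).
have u_in : u \in traject f w #|X|.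
  by rewrite -(iter_findex wu) -(nth_traject f wu_lt) mem_nth ?size_traject.
have := nth_index w u_in; rewrite nth_traject; last first.
  by rewrite -{2}(size_traject f w #|X|) index_mem.
rewrite /dist => e; have := iter_measure Df (index u (traject f w #|X|)) w.
rewrite e => De; rewrite De in Du *.
by rewrite subKn // ltnW // -subn_gt0.
Qed.

Lemma disjointP (X : finType) (A B : {set X}) :
  reflect (forall x, x \in A -> x \in B -> False) [disjoint A & B].
Proof.
rewrite disjoints_subset; apply: (iffP subsetP) => H x.
  by move=> xA xB; have := H x xA; rewrite inE xB.
by move=> xA; rewrite inE; apply/negP => xB; apply: (H x).
Qed.

Definition nested (X : finType) (A B : {set X}) :=
  (A \subset B) || (B \subset A) || [disjoint A & B].

Lemma nested_sym (X : finType) (A B : {set X}) : nested A B = nested B A.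
Proof. by rewrite /nested disjoint_sym; case: (A \subset B); case: (B \subset A). Qed.

(** * Depth and the tree order *)

Section Tree.
Variables (T : finType) (t : rtree T).
Local Notation p := (Defs.par t).
Local Notation r := (Defs.root t).
Local Notation tle := (Defs.tle p).

Lemma exists_iter_root x : exists n, iter n p x == r.
Proof. by exists (findex p x r); rewrite iter_findex // reach_root. Qed.

Definition depth x := ex_minn (exists_iter_root x).

Lemma iter_depth x : iter (depth x) p x = r.
Proof. by rewrite /depth; case: ex_minnP => n /eqP. Qed.

Lemma depth_min x n : iter n p x = r -> depth x <= n.
Proof. by rewrite /depth; case: ex_minnP => m _ H /eqP /H. Qed.

Lemma depth_root : depth r = 0.
Proof.
apply/eqP; rewrite -leqn0; apply: depth_min.
by elim: (depth r) => //= n ->; rewrite par_root.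
Qed.

Lemma depth0 x : depth x = 0 -> x = r.
Proof. by move=> h; have := iter_depth x; rewrite h. Qed.

Lemma depth_par x : depth (p x) = (depth x).-1.
Proof.
have [->|xr] := eqVneq x r; first by rewrite par_root depth_root.
have dx : 0 < depth x by rewrite lt0n; apply: contra_neq xr => /depth0.
apply/eqP; rewrite eqn_leq; apply/andP; split.
  by apply: depth_min; rewrite -iterSr prednK // iter_depth.
by rewrite -ltnS prednK //; apply: depth_min; rewrite iterSr iter_depth.
Qed.

Lemma depth_iter n x : depth (iter n p x) = depth x - n.
Proof. exact: (iter_measure depth_par). Qed.

Lemma tle_iterP a b : reflect (exists n, iter n p a = b) (tle a b).
Proof.
apply: (iffP idP); last by case=> n <-; apply: fconnect_iter.
by move=> h; exists (findex p a b); rewrite iter_findex.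
Qed.

Lemma tle_iter a b : tle a b -> iter (depth a - depth b) p a = b.
Proof.
case/tle_iterP=> n e.
have [b0|bpos] := posnP (depth b); first by rewrite b0 subn0 iter_depth (depth0 b0).
have Db := depth_iter n a; rewrite e in Db.
have na : n <= depth a by move: bpos; rewrite Db subn_gt0 => /ltnW.
by rewrite Db subKn.
Qed.

Lemma tle_refl a : tle a a.
Proof. exact: connect0. Qed.

Lemma tle_trans a b c : tle a b -> tle b c -> tle a c.
Proof. exact: connect_trans. Qed.

Lemma tle_par a : tle a (p a).
Proof. exact: (fconnect_iter p 1 a). Qed.

Lemma tle_depth a b : tle a b -> depth b <= depth a.
Proof. by move/tle_iter <-; rewrite depth_iter leq_subr. Qed.

Lemma tle_anti a b : tle a b -> tle b a -> a = b.
Proof.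
move=> ab ba; have e : depth a = depth b by apply/eqP; rewrite eqn_leq !tle_depth.
by have := tle_iter ab; rewrite e subnn.
Qed.

Lemma tle_lt a b : tle a b -> a != b -> depth b < depth a.
Proof.
move=> ab; rewrite ltn_neqAle tle_depth // andbT; apply: contra => /eqP e.
by have := tle_iter ab; rewrite e subnn => /= ->.
Qed.

Lemma tle_step a b : tle a b -> a != b -> tle (p a) b.
Proof.
move=> ab nab; have := tle_iter ab; have := tle_lt ab nab.
rewrite -subn_gt0; case: (depth a - depth b) => // n _.
by rewrite iterSr => <-; apply: fconnect_iter.
Qed.

Lemma tle_total a b c : tle a b -> tle a c -> tle b c || tle c b.
Proof.
case/tle_iterP=> i <-; case/tle_iterP=> j <-.
case: (leqP i j) => h; [apply/orP; left | apply/orP; right]; apply/tle_iterP.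
  by exists (j - i); rewrite -iterD subnK.
by exists (i - j); rewrite -iterD subnK // ltnW.
Qed.

Lemma tle_between_par c x : tle c x -> tle x (p c) -> x = c \/ x = p c.
Proof.
move=> cx xpc; have [->|ncx] := eqVneq c x; first by left.
by right; apply: tle_anti => //; apply: tle_step.
Qed.

Lemma exists_child_below a b : tle a b -> a != b ->
  exists c, [/\ tle a c, p c = b & c != b].
Proof.
move=> ab nab; have lt := tle_lt ab nab; have e := tle_iter ab.
exists (iter (depth a - depth b).-1 p a); split.
- exact: fconnect_iter.
- by rewrite -iterS prednK // subn_gt0.
- apply/eqP=> h; have := congr1 depth h; rewrite depth_iter; lia.
Qed.

Lemma tle_below_child u a c : tle u a -> tle u c -> tle a (p c) -> a != p c ->
  tle a c.
Proof.
move=> ua uc apc napc; case/orP: (tle_total ua uc) => // ca.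
case: (tle_between_par ca apc) => [->|e]; first exact: tle_refl.
by rewrite e eqxx in napc.
Qed.

Lemma card_segment a b :
  tle a b -> #|[set w | tle a w && tle w b]| = (depth a - depth b).+1.
Proof.
move Hn : (depth a - depth b) => n; elim: n a Hn => [|n IH] a Hn ab.
  have e := tle_iter ab; rewrite Hn /= in e; subst b.
  rewrite -(cards1 a); apply: eq_card => w; rewrite !inE.
  by apply/andP/eqP => [[h1 h2]|->]; [apply/esym/tle_anti|rewrite tle_refl].
have nab : a != b by apply: contra_eq_neq Hn => ->; rewrite subnn.
have Hn' : depth (p a) - depth b = n by rewrite depth_par; lia.
have e : [set w | tle a w && tle w b] = a |: [set w | tle (p a) w && tle w b].
  apply/setP=> w; rewrite !inE; apply/andP/orP.
    case=> aw wb; have [->|naw] := eqVneq w a; first by left.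
    right; rewrite wb andbT.
    case/orP: (tle_total (tle_par a) aw) => // h.
    case: (tle_between_par aw h) => [wa|->]; last exact: tle_refl.
    by rewrite wa eqxx in naw.
  case=> [/eqP->|/andP[h1 h2]]; first by rewrite tle_refl.
  by split=> //; apply: tle_trans (tle_par a) h1.
rewrite e cardsU1 IH ?tle_step // !inE.
suff /negbTE -> : ~~ tle (p a) a by [].
apply/negP=> h; have := tle_anti (tle_par a) h => e2.
have := depth_par a; rewrite -e2; have := tle_lt ab nab; lia.
Qed.

Lemma exists_leaf_below u : exists2 l, is_leaf p l & tle l u.
Proof.
case: (@arg_maxnP _ u (tle^~ u) depth (tle_refl u)) => l lu lmax.
exists l => //; apply/forallP => w; apply/implyP => /eqP pw.
apply/negPn/negP => nwl.
have wl : tle w l by rewrite -pw tle_par.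
have := lmax w (tle_trans wl lu); have := tle_lt wl nwl; lia.
Qed.

Lemma heightC_depth l v : tle l v -> heightC p l v = depth l - depth v.
Proof.
move=> lv; have := card_segment lv; rewrite (cardsD1 v) !inE tle_refl lv add1n.
case=> <-; apply: eq_card => w; rewrite !inE.
by case: (w != v); rewrite ?andbT ?andbF.
Qed.

(** * Ornamentations and Pop *)

Implicit Types (d : {ffun T -> {set T}}) (S : {set T}).

(* [orn_par] stands for the connectedness of [d v] in the tree. *)
Record ornamented (d : {ffun T -> {set T}}) : Prop := Ornamented {
  orn_self : forall v, v \in d v;
  orn_below : forall v w, w \in d v -> tle w v;
  orn_par : forall v w, w \in d v -> w != v -> p w \in d v;
  orn_nested : forall v v', nested (d v) (d v') }.

Lemma tree_edge_sym S : symmetric (tree_edge_in p S).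
Proof.
move=> x y; rewrite /tree_edge_in /=.
by case: (x \in S); case: (y \in S) => //=; rewrite orbC.
Qed.

Lemma ornament_par S v :
  ornament p S -> v \in S -> (forall w, w \in S -> tle w v) ->
  forall w, w \in S -> w != v -> p w \in S.
Proof.
case/andP=> _ /forall_inP conn vS Sv w wS nwv.
have /connectP [pth pth_ok pth_last] : connect (tree_edge_in p S) w v.
  by move/forall_inP: (conn w wS); apply.
(* Walk along the path from w to v: the first step leaving the subtree below w is
   necessarily the edge from w to its parent. *)
suff leave : forall pth z, path (tree_edge_in p S) z pth -> tle z w ->
    ~~ tle (last z pth) w -> p w \in S.
  apply: (leave pth w pth_ok (tle_refl w)); rewrite -pth_last.
  by apply: contra nwv => vw; rewrite (tle_anti (Sv w wS) vw).
elim=> [|y pth' IH] z /=; first by move=> _ ->.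
case/andP=> ezy pth'_ok zw nl.
have [yw|nyw] := boolP (tle y w); first exact: IH pth'_ok yw nl.
case/and3P: ezy => zS yS /orP [/andP [/eqP pz _]|/andP [/eqP py _]].
  have [ezw|nzw] := eqVneq z w; first by rewrite -ezw pz.
  by move: nyw; rewrite -pz tle_step.
by move: nyw; rewrite (tle_trans _ zw) // -py tle_par.
Qed.

Lemma connect_to_top S v : v \in S -> (forall w, w \in S -> tle w v) ->
  (forall w, w \in S -> w != v -> p w \in S) ->
  forall w, w \in S -> connect (tree_edge_in p S) w v.
Proof.
move=> vS Sv Spar w; move Hn : (depth w - depth v) => n.
elim: n w Hn => [|n IH] w Hn wS.
  by have := tle_iter (Sv w wS); rewrite Hn /= => ->; apply: connect0.
have nwv : w != v by apply: contra_eq_neq Hn => ->; rewrite subnn.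
have wv := tle_lt (Sv w wS) nwv.
have pwS := Spar w wS nwv.
have pw : p w != w by apply: contra_eq_neq (depth_par w) => ->; lia.
apply: connect_trans (IH (p w) _ pwS); last by rewrite depth_par; lia.
by apply: connect1; rewrite /tree_edge_in /= wS pwS eqxx eq_sym pw.
Qed.

Lemma is_ornamentationP d : reflect (ornamented d) (is_ornamentation p d).
Proof.
apply: (iffP idP).
  case/andP => [/andP [/forallP orn /forallP self_below] /forallP nest].
  have self v : v \in d v by case/andP: (self_below v).
  have below v w : w \in d v -> tle w v.
    by case/andP: (self_below v) => _ /forall_inP; apply.
  split=> // [v|v v']; last exact: (forallP (nest v) v').
  exact: ornament_par (orn v) (self v) (below v).
case=> self below orn_p nest; apply/andP; split; first (apply/andP; split).
- apply/forallP => v; apply/andP; split; first by apply/set0Pn; exists v.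
  apply/forall_inP => x xS; apply/forall_inP => y yS.
  apply: connect_trans (connect_to_top (self v) (below v) (orn_p v) xS) _.
  rewrite (sym_connect_sym (@tree_edge_sym (d v))).
  exact: (connect_to_top (self v) (below v) (orn_p v) yS).
- by apply/forallP => v; rewrite self /=; apply/forall_inP; apply: below.
- by apply/forallP => v; apply/forallP => v'; apply: nest.
Qed.

Lemma orn_between d v u x : ornamented d -> u \in d v -> tle u x -> tle x v ->
  x \in d v.
Proof.
case=> _ _ orn_p _ uv ux; rewrite -(tle_iter ux).
elim: (depth u - depth x) => [|n IH] //= xv.
have := IH (tle_trans (tle_par _) xv).
have [e|ne] := eqVneq (iter n p u) v; last by move=> h; apply: orn_p h ne.
by rewrite e in xv *; rewrite (tle_anti xv (tle_par v)).
Qed.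

Lemma orn_nested_sub d v v' x : ornamented d -> x \in d v -> x \in d v' ->
  tle v v' -> d v \subset d v'.
Proof.
case=> self below _ nest xv xv' vv'.
case/orP: (nest v v') => [/orP [//|h]|/disjointP/(_ x xv xv') //].
by rewrite (tle_anti vv' (below _ _ (subsetP h _ (self v')))).
Qed.

Lemma PopP d v x :
  reflect (x \in d v /\ forall d', orn_covered p d' d -> x \in d' v)
          (x \in Pop p d v).
Proof.
rewrite /Pop ffunE inE; apply: (iffP andP) => -[xd H]; split=> //.
  by move=> d' cov; move/bigcapP: H; apply.
by apply/bigcapP.
Qed.

Lemma Pop_sub d v x : x \in Pop p d v -> x \in d v.
Proof. by case/PopP. Qed.

Lemma Pop_covered d d' v x : orn_covered p d' d -> x \in Pop p d v -> x \in d' v.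
Proof. by move=> cov /PopP [_]; apply. Qed.

Lemma covered_ornamented d d' : orn_covered p d' d -> ornamented d'.
Proof. by case/and3P => /is_ornamentationP. Qed.

Lemma ornamented_Pop d : ornamented d -> ornamented (Pop p d).
Proof.
move=> od; have [self below orn_p nest] := od.
split.
- by move=> v; apply/PopP; split=> // d' /covered_ornamented/orn_self.
- by move=> v w /Pop_sub; apply: below.
- move=> v w wP nwv; apply/PopP; split; first exact: orn_p (Pop_sub wP) nwv.
  by move=> d' cov; exact: (orn_par (covered_ornamented cov) (Pop_covered cov wP) nwv).
- move=> v v'.
  case: (set_0Vmem (Pop p d v :&: Pop p d v')) => [/eqP|[x /setIP [xv xv']]].
    by rewrite setI_eq0 => disj; rewrite /nested disj !orbT.
  have sub a b : x \in Pop p d a -> x \in Pop p d b -> tle a b ->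
      Pop p d a \subset Pop p d b.
    move=> xa xb ab; apply/subsetP => y /PopP [ya ya']; apply/PopP; split.
      exact: subsetP (orn_nested_sub od (Pop_sub xa) (Pop_sub xb) ab) _ ya.
    move=> d' cov; have od' := covered_ornamented cov.
    exact: subsetP (orn_nested_sub od' (Pop_covered cov xa) (Pop_covered cov xb) ab) _ (ya' d' cov).
  case/orP: (tle_total (below _ _ (Pop_sub xv)) (below _ _ (Pop_sub xv'))) => h.
    by rewrite /nested sub.
  by rewrite /nested (sub v' v) ?orbT.
Qed.

Lemma ornamented_Popk k d0 : ornamented d0 -> ornamented (iter k (Pop p) d0).
Proof. by move=> od0; elim: k => //= k IH; apply: ornamented_Pop. Qed.

Lemma Popk_sub k d0 v x : x \in iter k (Pop p) d0 v -> x \in d0 v.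
Proof. by elim: k => //= k IH /Pop_sub /IH. Qed.

(** * Maximal blocks *)

Definition maximal_block d v b := [&& b \in d v, b != v &
  [forall x, (b \in d x) && tle x v ==> (x == b) || (x == v)]].

Lemma maximal_block_top d v b : maximal_block d v b ->
  forall x, b \in d x -> tle x v -> x = b \/ x = v.
Proof.
case/and3P=> _ _ /forallP top x bx xv; move/implyP: (top x); rewrite bx xv.
by case/(_ isT)/orP => /eqP; [left|right].
Qed.

Definition excise d v b : {ffun T -> {set T}} :=
  [ffun x => if x == v then d v :\: d b else d x].

Section Excise.
Variables (d : {ffun T -> {set T}}) (v b : T).
Hypotheses (od : ornamented d) (max_b : maximal_block d v b)
  (full_b : forall y, y \in d v -> tle y b -> y \in d b).

Let bv : b \in d v. Proof. by case/and3P: max_b. Qed.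
Let nbv : b != v. Proof. by case/and3P: max_b. Qed.

Let vNb : v \notin d b.
Proof. by apply: contra nbv => /(orn_below od) vb; rewrite (tle_anti vb (orn_below od bv)). Qed.

Lemma excise_v : excise d v b v = d v :\: d b.
Proof. by rewrite ffunE eqxx. Qed.

Lemma excise_neq x : x != v -> excise d v b x = d x.
Proof. by move=> nxv; rewrite ffunE (negbTE nxv). Qed.

Lemma nested_excise x : x != v -> nested (d v :\: d b) (d x).
Proof.
have [self below _ nest] := od.
move=> nxv; rewrite /nested; case/orP: (nest v x) => [/orP [vx|xv]|vx].
- by rewrite (subset_trans (subsetDl _ _) vx).
- case/orP: (nest x b) => [/orP [xb|bx]|xb].
  + apply/orP; right; apply/disjointP => y /setDP [_ yNb] yx.
    by rewrite (subsetP xb _ yx) in yNb.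
  + have xv' : tle x v by apply: below; apply: (subsetP xv); apply: self.
    case: (maximal_block_top max_b (subsetP bx _ (self b)) xv') => [x_eq_b|x_eq_v].
      by apply/orP; right; apply/disjointP => y /setDP [_]; rewrite x_eq_b => /negP.
    by rewrite x_eq_v eqxx in nxv.
  + apply/orP; left; apply/orP; right; apply/subsetP => y yx.
    by rewrite inE (subsetP xv _ yx) (disjointFr xb yx).
- apply/orP; right; apply/disjointP => y /setDP [yv _] yx.
  exact: (disjointP _ _ vx y yv yx).
Qed.

Lemma ornamented_excise : ornamented (excise d v b).
Proof.
have [self below orn_p nest] := od.
split=> [x|x w|x w|x x'].
- have [->|nxv] := eqVneq x v; first by rewrite excise_v inE self vNb.
  by rewrite excise_neq.
- have [->|nxv] := eqVneq x v; last by rewrite excise_neq //; apply: below.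
  by rewrite excise_v inE => /andP [_]; apply: below.
- have [->|nxv] := eqVneq x v; last by rewrite excise_neq //; apply: orn_p.
  rewrite excise_v !inE => /andP [wNb wv] nwv; rewrite (orn_p v w wv nwv) andbT.
  apply: contra wNb => pwb; apply: full_b wv _.
  exact: tle_trans (tle_par w) (below _ _ pwb).
- have [->|nxv] := eqVneq x v; have [->|nx'v] := eqVneq x' v.
  + by rewrite excise_v /nested subxx.
  + by rewrite excise_v excise_neq // nested_excise.
  + by rewrite excise_v excise_neq // nested_sym nested_excise.
  + by rewrite !excise_neq.
Qed.

(* An ornamentation strictly between [excise d v b] and [d] agrees with [d]
   away from [v]; nesting its [v]-set with [d b] leaves only the two extremes. *)
Lemma excise_covered : orn_covered p (excise d v b) d.
Proof.
apply/and3P; split; first exact/is_ornamentationP/ornamented_excise.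
  apply/andP; split.
    apply/forallP => x; have [->|nxv] := eqVneq x v; last by rewrite excise_neq.
    by rewrite excise_v subsetDl.
  apply/eqP => /ffunP /(_ v) /setP /(_ b).
  by rewrite excise_v inE bv (orn_self od).
apply/forallP => d''; apply/negP => /and3P [/is_ornamentationP od'' lt1 lt2].
case/andP: lt1 => /forallP sub1 ne1; case/andP: lt2 => /forallP sub2 ne2.
have off_v x : x != v -> d'' x = d x.
  by move=> nxv; apply/eqP; rewrite eqEsubset sub2 -(excise_neq nxv) sub1.
have d''b := off_v b nbv.
case/orP: (orn_nested od'' v b) => [/orP [vb|bv']|vb].
- by move: vNb; rewrite -d''b (subsetP vb _ (orn_self od'' v)).
- move/eqP: ne2; apply; apply/ffunP => x.
  have [->|nxv] := eqVneq x v; last exact: off_v.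
  apply/eqP; rewrite eqEsubset sub2; apply/subsetP => y yv.
  have [yb|yNb] := boolP (y \in d b); first by rewrite -d''b in yb; apply: (subsetP bv').
  by apply: (subsetP (sub1 v)); rewrite excise_v inE yNb.
- move/eqP: ne1; apply; apply/ffunP => x.
  have [->|nxv] := eqVneq x v; last by rewrite off_v // excise_neq.
  apply/eqP; rewrite eqEsubset sub1 excise_v; apply/subsetP => y yv.
  by rewrite inE (subsetP (sub2 v) _ yv) andbT -d''b (disjointFr vb yv).
Qed.

Lemma Pop_excised y : y \in d b -> y \notin Pop p d v.
Proof.
move=> yb; apply/negP => /(Pop_covered excise_covered).
by rewrite excise_v inE yb.
Qed.

End Excise.

Lemma exists_maximal_block d v u : ornamented d -> u \in d v -> u != v ->
  exists b, [/\ tle u b, u \in d b & maximal_block d v b].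
Proof.
move=> od uv nuv; have [self below _ _] := od.
pose P x := [&& tle u x, tle x v, x != v & u \in d x].
have Pu : P u by rewrite /P tle_refl (below _ _ uv) nuv self.
case: (@arg_minnP _ u P depth Pu) => b /and4P [ub bv nbv ub'] bmin.
exists b; split => //; apply/and3P; split => //; first exact: orn_between od uv ub bv.
apply/forallP => x; apply/implyP => /andP [bx xv].
have [->|nxv] := eqVneq x v; first by rewrite orbT.
have bx' := below _ _ bx.
have ux : u \in d x := subsetP (orn_nested_sub od (self b) bx bx') _ ub'.
have := bmin x; rewrite /P (tle_trans ub bx') xv nxv ux => /(_ isT) dbx.
have [//|ne] := eqVneq b x.
by have := tle_lt bx' ne; rewrite ltnNge dbx.
Qed.

(* The deepest maximal block below a child [c] of [v] contains everything of
   [d v] below it: a node outside it would lie in a deeper maximal block. *)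
Lemma exists_full_maximal_block d v c : ornamented d -> c \in d v ->
  p c = v -> c != v ->
  exists b, [/\ tle b c, maximal_block d v b &
                forall y, y \in d v -> tle y b -> y \in d b].
Proof.
move=> od cv pc ncv; have [_ below _ _] := od.
have max_c : maximal_block d v c.
  apply/and3P; split => //; apply/forallP => x; apply/implyP => /andP [cx xv].
  rewrite -pc in xv *.
  by case: (tle_between_par (below _ _ cx) xv) => ->; rewrite eqxx ?orbT.
pose P x := tle x c && maximal_block d v x.
have Pc : P c by rewrite /P tle_refl.
case: (@arg_maxnP _ c P depth Pc) => b /andP [bc max_b] bmax.
exists b; split => // y yv yb.
have nyv : y != v.
  move: ncv; apply: contra_neq => yv_eq; apply: tle_anti (below _ _ cv) _.
  by rewrite -yv_eq (tle_trans yb bc).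
case: (exists_maximal_block od yv nyv) => b' [yb' yinb' max_b'].
have [b'v nb'v _] := and3P max_b'.
have b'c : tle b' c.
  by apply: tle_below_child yb' (tle_trans yb bc) _ _; rewrite pc // below.
have db' : depth b' <= depth b by apply: bmax; rewrite /P b'c max_b'.
case/orP: (tle_total yb' yb) => bb'.
  have [e|ne] := eqVneq b' b; first by rewrite -e.
  by have := tle_lt bb' ne; rewrite ltnNge db'.
have [e|ne] := eqVneq b b'; first by rewrite e.
have bb'_in : b \in d b' := orn_between od yinb' yb bb'.
by case: (maximal_block_top max_b bb'_in (below _ _ b'v)) => e;
  rewrite e eqxx in ne nb'v.
Qed.

Lemma Pop_drops_below_child d v c : ornamented d -> p c = v -> c != v ->
  c \in Pop p d v -> exists b, [/\ tle b c, b \in d v & b \notin Pop p d v].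
Proof.
move=> od pc ncv cP.
case: (exists_full_maximal_block od (Pop_sub cP) pc ncv) => b [bc max_b full_b].
exists b; split => //; first by case/and3P: max_b.
exact: (Pop_excised od max_b full_b (orn_self od b)).
Qed.

Lemma Pop_minimal_block d v u : ornamented d -> u \in Pop p d v -> u != v ->
  (forall y, y \in d v -> tle y u -> y = u) ->
  exists b, [/\ tle u b, u \in d b, b != u & maximal_block d v b].
Proof.
move=> od uP nuv umin.
case: (exists_maximal_block od (Pop_sub uP) nuv) => b [ub ub' max_b].
exists b; split => //; apply: contraTneq uP => bu; rewrite bu in max_b.
have full_u y : y \in d v -> tle y u -> y \in d u.
  by move=> yv /(umin y yv) ->; apply: orn_self.
exact: (Pop_excised od max_b full_u (orn_self od u)).
Qed.

Lemma fseq_mono l : {homo fseq p l : i j / i <= j}.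
Proof.
move=> i j /subnK <-; elim: (j - i) => // n IH; rewrite addSn /=.
by case: ifP => _; rewrite ?IH // (leq_trans IH) // leq_addr.
Qed.

Lemma fC_mono l a b : tle l a -> tle a b -> fC p l a <= fC p l b.
Proof.
move=> la ab; rewrite /fC !heightC_depth ?(tle_trans la ab) //.
by apply: fseq_mono; rewrite leq_sub2l // tle_depth.
Qed.

Lemma fC_par_ge l c : tle l c -> p c != c ->
  minn (fC p l c).+1 (bC p l c) <= fC p l (p c).
Proof.
move=> lc pc; have lpc := tle_trans lc (tle_par c).
have c_pos : 0 < depth c.
  by rewrite lt0n; apply: contra_neq pc => /depth0 ->; rewrite par_root.
have hpc : heightC p l (p c) = (heightC p l c).+1.
  by rewrite !heightC_depth // depth_par; have := tle_depth lc; lia.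
have e : iter (heightC p l c) p l = c by rewrite heightC_depth // tle_iter.
by rewrite /fC hpc /= e; case: ifP; lia.
Qed.

Section Popk.
Variable d0 : {ffun T -> {set T}}.
Hypothesis od0 : ornamented d0.
Local Notation d k := (iter k (Pop p) d0).

Lemma Popk_card_missing k v c : p c = v -> c != v -> c \in d k v ->
  k <= #|Delta p c :\: d k v|.
Proof.
move=> pc ncv; elim: k => // k IH /= cP.
have [b [bc bv bP]] := Pop_drops_below_child (ornamented_Popk k od0) pc ncv cP.
apply: leq_ltn_trans (IH (Pop_sub cP)) _; apply: proper_card; apply/properP; split.
  apply/subsetP => y; rewrite !inE => /andP [yP yc]; rewrite yc andbT.
  by apply: contra yP; apply: Pop_sub.
by exists b; rewrite !inE ?bP ?bv ?bc.
Qed.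

Lemma Popk_card_Delta_child k v c u : p c = v -> c != v -> u \in d k v ->
  tle u c -> k + (depth u - depth c).+1 <= #|Delta p c|.
Proof.
move=> pc ncv uv uc; have odk := ornamented_Popk k od0.
have cv : tle c v by rewrite -pc tle_par.
have missing := Popk_card_missing pc ncv (orn_between odk uv uc cv).
have segment : (depth u - depth c).+1 <= #|Delta p c :&: d k v|.
  rewrite -(card_segment uc); apply: subset_leq_card; apply/subsetP => w.
  rewrite !inE => /andP [uw wc]; rewrite wc.
  exact: orn_between odk uv uw (tle_trans wc cv).
by rewrite -(cardsID (d k v) (Delta p c)) addnC leq_add.
Qed.

Lemma Popk_leaf_bound k v u : u \in d k v -> u != v ->
  exists l, [/\ is_leaf p l, tle l u & k <= depth l - depth u + fC p l v].
Proof.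
elim: k v u => [|k IH] v u uv nuv.
  by case: (exists_leaf_below u) => l ll lu; exists l.
have odk := ornamented_Popk k od0.
have uv_le := orn_below odk (Pop_sub uv).
case: (pickP (fun y => [&& y \in d k v, tle y u & y != u])) => [y /and3P [yv yu nyu]|umin].
  have nyv : y != v.
    by apply: contra_neq nuv => yv_eq; apply: tle_anti uv_le _; rewrite -yv_eq.
  case: (IH v y yv nyv) => l [ll ly hk]; exists l; split => //.
    exact: tle_trans ly yu.
  by have := tle_lt yu nyu; have := tle_depth ly; lia.
have umin' y : y \in d k v -> tle y u -> y = u.
  by move=> yv yu; move: (umin y); rewrite /= yv yu /= => /negbFE /eqP.
case: (Pop_minimal_block odk uv nuv umin') => b [ub ub' nbu max_b].
have [bv nbv _] := and3P max_b.
have nub : u != b by rewrite eq_sym.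
have [l [ll lu hk]] := IH b u ub' nub.
have [c [uc pc ncv]] := exists_child_below uv_le nuv.
have bc : tle b c by apply: tle_below_child ub uc _ _; rewrite pc // (orn_below odk bv).
have card := Popk_card_Delta_child pc ncv uv uc.
have lc := tle_trans lu uc.
have fbc := fC_mono (tle_trans lu ub) bc.
have pcc : p c != c by rewrite pc eq_sym.
have := fC_par_ge lc pcc; rewrite pc /bC heightC_depth // => fv.
exists l; split => //.
have du := tle_depth lu; have dc := tle_depth uc.
clear -hk fbc fv card du dc; lia.
Qed.

End Popk.

(** * The extended tree T*_v *)

Definition depth_star (v : T) (x : Tstar p v) : nat :=
  match x with inl y => depth y | inr (existT l i) => depth l + i + 1 end.

Lemma depth_star_par v (x : Tstar p v) : depth_star (par_star x) = (depth_star x).-1.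
Proof.
case: x => [y|[l [[|n] H]]] /=; first by rewrite depth_par.
  by rewrite addn0 addn1.
by rewrite !addn1 addnS.
Qed.

Lemma iter_par_star_inl v n x :
  iter n (@par_star _ p v) (inl x) = inl (iter n p x).
Proof. by elim: n => //= n ->. Qed.

Lemma iter_par_star_inr v l i (H : i < ext p v l) :
  iter i.+1 (@par_star _ p v) (inr (existT _ l (Ordinal H))) = inl l.
Proof. by elim: i H => // i IH H; rewrite iterSr; apply: IH. Qed.

Lemma height_star_ge v u l : is_leaf p l -> tle l u -> tle u v -> u != v ->
  depth l - depth u + fC p l v <= height (@par_star _ p v) (inl u).
Proof.
move=> ll lu uv nuv.
have ext_l : ext p v l = fC p l v by rewrite /ext ll (tle_trans lu uv).
have u_pos : 0 < depth u by apply: leq_ltn_trans (tle_lt uv nuv).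
have lu_star : fconnect (@par_star _ p v) (inl l) (inl u).
  by rewrite -(tle_iter lu) -iter_par_star_inl; apply: fconnect_iter.
suff [w [wu Dw]] : exists w : Tstar p v,
    fconnect (@par_star _ p v) w (inl u) /\ depth_star w = depth l + ext p v l.
  apply: leq_trans _ (@leq_bigmax_cond _ _ (fun w => dist (@par_star _ p v) w (inl u)) w wu).
  rewrite (dist_measure (@depth_star_par v) wu) //= Dw -ext_l.
  by have := tle_depth lu; lia.
case e: (ext p v l) => [|i]; first by exists (inl l); rewrite addn0.
have H : i < ext p v l by rewrite e.
exists (inr (existT _ l (Ordinal H))); split => /=; last by rewrite addn1 addnS.
by apply: connect_trans lu_star; rewrite -(iter_par_star_inr H); apply: fconnect_iter.
Qed.

End Tree.

Theorem proposition3p3 (T : finType) (t : rtree T) (k : nat)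
  (d : {ffun T -> {set T}}) :
  in_Popk (par t) k d ->
  forall v u : T, u \in d v -> rank_ge (rk (par t) v u) k.
Proof.
case=> d0 [/is_ornamentationP od0 ->] v u uv.
have uv_le : tle (par t) u v := orn_below od0 (Popk_sub uv).
rewrite /rk uv_le /=; have [//|nuv] := eqVneq u v.
have [l [ll lu hk]] := Popk_leaf_bound od0 uv nuv.
exact: leq_trans hk (height_star_ge ll lu uv_le nuv).
Qed.
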